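(* Let $(\Theta,\mathcal{D})$ be a measurable space with a probability measure $\nu$, and let $\mathcal{M}^\Theta=\{P^\theta:\theta\in\Theta\}\subseteq\mathcal{M}_1$ with $\theta\mapsto P^\theta(A)$ measurable for all $A\in\mathcal{F}$, and suppose $\mathcal{M}^\Theta$ is closed under countable convex combinations. Let $\mathbb{P}(A)=\int_\Theta P^\theta(A)\,\nu(\mathrm{d}\theta)$ be the mixture probability measure. Let $\alpha$ be of the form $\alpha(Q)=\widetilde\alpha(Q)$ for $Q\in\mathcal{Q}^{\mathbb{P}}$, $\alpha(Q)=+\infty$ for $Q\in\mathcal{M}_1\setminus\mathcal{Q}^{\mathbb{P}}$, where $\mathcal{Q}^{\mathbb{P}}$ is a weak-$*$-closed subset of $\mathcal{P}^{\mathbb{P}}$, $\widetilde\alpha<\infty$ on $\mathcal{Q}^{\mathbb{P}}$ and $\inf_{\mathcal{Q}^{\mathbb{P}}}\widetilde\alpha>-\infty$. Suppose that for all $A\in\mathcal{F}$ with $\mathbb{P}(A)>0$, $$\mathbb{P}(A)>\int_\Theta\widetilde P_2^\theta(A)\,\nu(\mathrm{d}\theta),$$ where $\widetilde P_2^\theta$ denotes the (unnormalized) singular part of the Lebesgue decomposition of $P^\theta$ with respect to $\mathbb{P}$. Then for all $X\in\mathcal{X}^{\mathcal{M}^\Theta}\cap L^\infty(\mathbb{P})$, $$\widehat\rho^{\mathcal{M}^\Theta}(X)=\widehat\rho^{\mathbb{P}}(X)=\rho^{\mathbb{P}}(X)=\rho^{\mathcal{M}^\Theta}(X).$$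
   Context: $(\Omega,\mathcal{F})$ is a measurable space, $\mathcal{M}_1$ the set of probability measures on it with the topology of weak (weak-$*$) convergence, $\mathcal{X}$ the space of pointwise bounded $\mathcal{F}$-measurable real functions, $L^\infty(P)=L^\infty(\Omega,\mathcal{F},P)$, $\mathcal{P}^P=\{Q\in\mathcal{M}_1:Q\ll P\}$. With $\alpha$ as in the claim, $\rho(X)=\sup_{Q\in\mathcal{M}_1}\{\mathbb{E}_Q[-X]-\alpha(Q)\}$ on $\mathcal{X}$ (assumed real-valued). For $P\in\mathcal{M}_1$, $X\in L^\infty(P)$: $\rho^P(X)=\inf_{\{\widetilde X\in\mathcal{X}:P(\widetilde X=X)=1\}}\rho(\widetilde X)$ and $\widehat\rho^P(X)=\sup_{Q\in\mathcal{P}^P}\{\mathbb{E}_Q[-X]-\alpha(Q)\}$. For $\mathcal{M}\subseteq\mathcal{M}_1$: $\mathcal{X}^{\mathcal{M}}=\bigcap_{P\in\mathcal{M}}L^\infty(P)$, $\rho^{\mathcal{M}}(X)=\sup_{P\in\mathcal{M}}\rho^P(X)$, $\widehat\rho^{\mathcal{M}}(X)=\sup_{P\in\mathcal{M}}\widehat\rho^P(X)$. Closed under countable convex combinations: $\sum_i\lambda_iP_i\in\mathcal{M}^\Theta$ for $P_i\in\mathcal{M}^\Theta$, $\lambda_i\ge0$, $\sum\lambda_i=1$. *)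

From HB Require Import structures.
From mathcomp Require Import all_boot all_order all_algebra.
From mathcomp Require Import all_classical all_reals all_analysis measurable_realfun.
Set Implicit Arguments. Unset Strict Implicit. Unset Printing Implicit Defensive.
Import Order.TTheory GRing.Theory Num.Theory.
Import numFieldNormedType.Exports.
Local Open Scope classical_set_scope.
Local Open Scope ring_scope.
Local Open Scope ereal_scope.

Section defs.
Context {d : measure_display} {T : measurableType d} {R : realType}.

Definition bdd_meas (X : T -> R) : Prop :=
  measurable_fun setT X /\ exists M : R, forall w, (`|X w| <= M)%R.

(* X ∈ L^∞(P) : measurable and P-essentially bounded (represented by a function) *)
Definition Linf (P : probability T R) (X : T -> R) : Prop :=
  measurable_fun setT X /\ exists M : R, {ae P, forall w, (`|X w| <= M)%R}.

Definition expect (Q : probability T R) (Y : T -> R) : \bar R :=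
  \int[Q]_w (Y w)%:E.

(* closedness in M_1 for the weak topology σ(M_1, 𝒳): the complement is open,
   i.e. every Q outside C has a basic neighbourhood
   {Q' : |E_Q'[f_i] - E_Q[f_i]| < e, i < n} (f_i ∈ 𝒳) disjoint from C *)
Definition weak_closed (C : set (probability T R)) : Prop :=
  forall Q, ~ C Q ->
    exists (n : nat) (f : nat -> T -> R) (e : R),
      (0 < e)%R /\ (forall i, (i < n)%N -> bdd_meas (f i)) /\
      forall Q' : probability T R,
        (forall i, (i < n)%N ->
           `| expect Q' (f i) - expect Q (f i) | < e%:E) -> ~ C Q'.

Definition rho (alpha : probability T R -> \bar R) (X : T -> R) : \bar R :=
  ereal_sup [set expect Q (fun w => - X w)%R - alpha Q | Q in [set: probability T R]].

Definition rhoP (alpha : probability T R -> \bar R) (P : probability T R)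
  (X : T -> R) : \bar R :=
  ereal_inf [set rho alpha Xt | Xt in
    [set Xt | bdd_meas Xt /\ P [set w | Xt w = X w] = 1]].

Definition rhohatP (alpha : probability T R -> \bar R) (P : probability T R)
  (X : T -> R) : \bar R :=
  ereal_sup [set expect Q (fun w => - X w)%R - alpha Q |
               Q in [set Q : probability T R | Q `<< P]].

Definition rhoM (alpha : probability T R -> \bar R) (M : set (probability T R))
  (X : T -> R) : \bar R :=
  ereal_sup [set rhoP alpha P X | P in M].

Definition rhohatM (alpha : probability T R -> \bar R) (M : set (probability T R))
  (X : T -> R) : \bar R :=
  ereal_sup [set rhohatP alpha P X | P in M].

Definition msingular (mu nu : set T -> \bar R) : Prop :=
  exists N, measurable N /\ mu N = 0 /\ nu (~` N) = 0.

Definition lebesgue_singular_part (mu nu : set T -> \bar R)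
  (Ps : {measure set T -> \bar R}) : Prop :=
  (exists Pa : {measure set T -> \bar R},
      Pa `<< nu /\ forall A, measurable A -> mu A = Pa A + Ps A) /\
  msingular Ps nu.

End defs.

(* Since alpha = +oo off QP and every Q in QP is absolutely continuous
   w.r.t. the mixture Pmix, the supremum defining rho(Xt) only involves
   Q << Pmix, so rho(Xt) = rhohat^Pmix(X) for every bounded Pmix-version Xt
   of X.  Hence rhohat^P(X) and rho^P(X) are at most rhohat^Pmix(X) for every
   P (truncation gives a bounded version common to P and Pmix), with equality
   when Pmix << P.  It remains to find th0 with Pmix << P^th0.  Choose th0
   minimising the largest Pmix-mass of a P^th0-null set; the minimum is
   attained because one countable convex combination dominates countably many
   P^th.  If a P^th0-null set A had Pmix(A) > 0, the hypothesis on the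
   singular parts would give th1 whose absolutely continuous part charges A.
   A combination of th0 and th1 has a null set A' of the same maximal
   Pmix-mass; A' is P^th1-null and contains A up to a Pmix-null set, so the
   absolutely continuous part of P^th1 vanishes on A: a contradiction. *)

From HB Require Import structures.
From mathcomp Require Import all_boot all_order all_algebra.
From mathcomp Require Import all_classical all_reals all_analysis measurable_realfun.
Import Order.TTheory GRing.Theory Num.Theory.
Import numFieldNormedType.Exports.
Local Open Scope classical_set_scope.
Local Open Scope ring_scope.
Local Open Scope ereal_scope.

Section ereal_extremum_attained.
Context {R : realType} {I : Type} (D : set I).

Lemma ereal_inf_attained (f : I -> \bar R) : D !=set0 ->
  (forall s : nat -> I, (forall n, D (s n)) ->
     exists2 i, D i & forall n, f i <= f (s n)) ->
  exists2 i, D i & f i = ereal_inf (f @` D).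
Proof.
move=> [i0 Di0] lb_seq.
have /ereal_inf_seq[u Du cvg_u] : f @` D != set0.
  by apply/set0P; exists (f i0), i0.
have /choice[s hs] : forall n, exists i, D i /\ f i = u n.
  by move=> n; have [i Di fi] := Du n; exists i.
have [i Di lb_i] := lb_seq s (fun n => (hs n).1).
exists i => //; apply/eqP.
rewrite eq_le ereal_inf_lbound ?andbT; last by exists i.
rewrite -(cvg_lim _ cvg_u)//; apply: lime_ge; first exact: cvgP cvg_u.
by apply: nearW => n; rewrite -(hs n).2.
Qed.

Lemma ereal_sup_attained (f : I -> \bar R) : D !=set0 ->
  (forall s : nat -> I, (forall n, D (s n)) ->
     exists2 i, D i & forall n, f (s n) <= f i) ->
  exists2 i, D i & f i = ereal_sup (f @` D).
Proof.
move=> D0 ub_seq.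
have [|i Di fi] := ereal_inf_attained (fun i => - f i) D0.
  move=> s Ds; have [i Di ub_i] := ub_seq s Ds.
  by exists i => // n; rewrite leeN2.
exists i => //; apply: oppe_inj; rewrite fi -ereal_infN.
by rewrite (image_comp f -%E).
Qed.

Lemma ereal_sup_image_eq (f : I -> \bar R) x i0 : D i0 -> x <= f i0 ->
  (forall i, D i -> f i <= x) -> ereal_sup (f @` D) = x.
Proof.
move=> Di0 le_x ub; apply/eqP; rewrite eq_le; apply/andP; split.
  by apply: ge_ereal_sup => _ [i Di <-]; exact: ub.
by apply: le_trans le_x _; apply: ereal_sup_ubound; exists i0.
Qed.

End ereal_extremum_attained.

Lemma eseries_geometric_half {R : realType} :
  \sum_(0 <= i <oo) ((1 / (2 ^ (i + 1))%:R : R)%:E) = 1.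
Proof.
have := @cvg_geometric_eseries_half R 1 0; rewrite expr0 divr1.
by move/cvg_lim; apply.
Qed.

Lemma nneseries_eq0 {R : realType} (u : (\bar R)^nat) : (forall i, 0 <= u i) ->
  \sum_(0 <= i <oo) u i = 0 -> forall i, u i = 0.
Proof.
move=> u0 sum0 i; move: sum0; rewrite (nneseriesD1 (n := i))// => /eqP.
by rewrite padde_eq0 ?u0 ?nneseries_ge0// => /andP[/eqP].
Qed.

Definition null_mass {d} {T : measurableType d} {R : realType}
    (mu P : set T -> \bar R) : \bar R :=
  ereal_sup [set mu A | A in [set A | measurable A /\ P A = 0]].

Section null_mass.
Context {d : measure_display} {T : measurableType d} {R : realType}.
Implicit Types (mu P : {measure set T -> \bar R}) (A : set T).

Lemma null_mass_ub mu P {A} : measurable A -> P A = 0 -> mu A <= null_mass mu P.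
Proof. by move=> mA PA; apply: ereal_sup_ubound; exists A. Qed.

Lemma le_null_mass mu P P' : P' `<< P -> null_mass mu P <= null_mass mu P'.
Proof.
move=> /null_content_dominatesP PP'; apply: ge_ereal_sup => _ [A [mA PA] <-].
exact/null_mass_ub/PP'.
Qed.

Lemma null_mass_attained mu P :
  exists2 A, measurable A /\ P A = 0 & mu A = null_mass mu P.
Proof.
apply: ereal_sup_attained; first by exists set0; split; rewrite ?measure0.
move=> s Ps; have ms n : measurable (s n) by case: (Ps n).
have mU : measurable (\bigcup_n s n) by exact: bigcupT_measurable.
exists (\bigcup_n s n); last first.
  by move=> n; apply: le_measure; rewrite ?inE//; exact: bigcup_sup.
split => //; apply/negligibleP => //; apply: negligible_bigcup => n.
by apply/negligibleP => //; case: (Ps n).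
Qed.

Lemma null_mass_maximal (mu : {finite_measure set T -> \bar R}) P {A A'} :
  measurable A -> P A = 0 -> measurable A' -> P A' = 0 ->
  mu A' = null_mass mu P -> mu (A `\` A') = 0.
Proof.
move=> mA PA mA' PA' maxA'.
have mAD : measurable (A `\` A') by exact: measurableD.
have PU : P (A' `|` (A `\` A')) = 0.
  apply/negligibleP; first exact: measurableU.
  apply: negligibleU; first exact/negligibleP.
  by apply: (negligibleS (@subDsetl _ A A')); exact/negligibleP.
have := null_mass_ub mu P (measurableU _ _ mA' mAD) PU.
rewrite measureU//; last by rewrite setDE setICA setICr setI0.
rewrite -maxA' -leeBrDl ?fin_num_measure// subee ?fin_num_measure// => le0.
by apply/eqP; rewrite eq_le le0 measure_ge0.
Qed.

End null_mass.

Section versions.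
Context {d : measure_display} {T : measurableType d} {R : realType}.
Implicit Types (P Q : probability T R) (f g X : T -> R).

Lemma measurable_eqr f g : measurable_fun setT f -> measurable_fun setT g ->
  measurable [set w | f w = g w].
Proof.
move=> mf mg; have := measurable_funB mf mg measurableT (measurable_set1 0%R).
rewrite setTI; congr measurable; apply/seteqP; split=> w /=.
  by move/eqP; rewrite subr_eq0 => /eqP.
by move=> ->; rewrite subrr.
Qed.

Lemma probability_eq1_ae P (S : set T) : measurable S ->
  P S = 1 <-> {ae P, forall w, S w}.
Proof.
move=> mS; rewrite /almost_everywhere.
change (P S = 1 <-> P.-negligible (~` S)).
rewrite negligibleP; last exact: measurableC.
(* negligibleP leaves P coerced as a content; restate so that
   probability_setC applies *)
change (P S = 1 <-> P (~` S) = 0); rewrite probability_setC//.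
split=> [->|]; first by rewrite subee.
by move/(congr1 (+%E^~ (P S))); rewrite subeK ?fin_num_measure// add0e => ->.
Qed.

Lemma ae_dominated {mu nu : {measure set T -> \bar R}} {S : set T} :
  nu `<< mu -> {ae mu, forall w, S w} -> {ae nu, forall w, S w}.
Proof.
move=> /null_content_dominatesP dom [N [mN muN SN]].
by exists N; split => //; exact: dom.
Qed.

Lemma expect_ae_eq Q f g : measurable_fun setT f -> measurable_fun setT g ->
  {ae Q, forall w, f w = g w} -> expect Q f = expect Q g.
Proof.
move=> mf mg fg; apply: ae_eq_integral => //; try exact/measurable_EFinP.
by apply: filterS fg => w -> _.
Qed.

Lemma exists_bounded_version {P P' X} : Linf P X -> Linf P' X ->
  exists Xt, [/\ bdd_meas Xt, {ae P, forall w, Xt w = X w}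
                 & {ae P', forall w, Xt w = X w}].
Proof.
move=> [mX [M1 bdP]] [_ [M2 bdP']].
pose M := Num.max (Num.max M1 M2) 0%R.
have M_ge0 : (0 <= M)%R by rewrite le_max lexx orbT.
pose Xt := cst (- M)%R \max (cst M \min X).
have XtE Mi w : (Mi <= M)%R -> (`|X w| <= Mi)%R -> Xt w = X w.
  move=> MiM /le_trans /(_ MiM); rewrite ler_norml => /andP[lbX ubX].
  by rewrite /Xt /= (min_r ubX) (max_r lbX).
exists Xt; split.
- split; first by apply: measurable_maxr => //; exact: measurable_minr.
  exists M => w; rewrite ler_norml le_max lexx ge_max ge_min lexx /= andbT.
  by rewrite lerNl (le_trans _ M_ge0)// oppr_le0.
- by apply: filterS bdP => w; apply: XtE; rewrite !le_max lexx.
- by apply: filterS bdP' => w; apply: XtE; rewrite !le_max lexx orbT.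
Qed.

End versions.

Section dominating_parameter.
Context {d : measure_display} {Omega : measurableType d} {R : realType}
  {dT : measure_display} {Theta : measurableType dT}
  {nu : probability Theta R} {Pth : Theta -> probability Omega R}
  {Pmix : probability Omega R} {P2 : Theta -> {measure set Omega -> \bar R}}.
Hypothesis convex_closed : forall (th : nat -> Theta) (lam : nat -> R),
  (forall i, 0 <= lam i)%R -> \sum_(0 <= i <oo) (lam i)%:E = 1 ->
  exists th0, forall A, measurable A ->
    Pth th0 A = \sum_(0 <= i <oo) (lam i)%:E * Pth (th i) A.
Hypothesis Pmix_mixture :
  forall A, measurable A -> Pmix A = \int[nu]_th Pth th A.
Hypothesis P2_singular :
  forall th, lebesgue_singular_part (Pth th) Pmix (P2 th).
Hypothesis singular_lt_mixture : forall A, measurable A -> 0 < Pmix A ->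
  \int[nu]_th P2 th A < Pmix A.

Lemma exists_dominating_seq (th : nat -> Theta) :
  exists th0, forall n, Pth (th n) `<< Pth th0.
Proof.
pose lam i : R := (1 / (2 ^ (i + 1))%:R)%R.
have lam_gt0 i : (0 < lam i)%R by rewrite divr_gt0// ltr0n expn_gt0.
have [th0 th0E] :=
  convex_closed th lam (fun i => ltW (lam_gt0 i)) eseries_geometric_half.
exists th0 => n; apply/null_content_dominatesP => A mA P0A.
have terms_ge0 i : 0 <= (lam i)%:E * Pth (th i) A.
  by rewrite mule_ge0// lee_fin ltW.
have /eqP := nneseries_eq0 _ terms_ge0 (etrans (esym (th0E A mA)) P0A) n.
by rewrite mule_eq0 eqe gt_eqF//= => /eqP.
Qed.

Lemma exists_min_null_mass :
  exists th0, forall th, null_mass Pmix (Pth th0) <= null_mass Pmix (Pth th).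
Proof.
have Theta0 : [set: Theta] !=set0.
  apply/set0P/negP => /eqP Theta0.
  have := probability_setT nu; rewrite Theta0 measure0 => /eqP.
  by rewrite eqe eq_sym oner_eq0.
have [th0 _ th0E] : exists2 th0, [set: Theta] th0 &
    null_mass Pmix (Pth th0) =
      ereal_inf [set null_mass Pmix (Pth th) | th in [set: Theta]].
  apply: ereal_inf_attained Theta0 _ => s _.
  have [th0 dom] := exists_dominating_seq s.
  by exists th0 => // n; exact: le_null_mass (dom n).
by exists th0 => th; rewrite th0E; apply: ereal_inf_lbound; exists th.
Qed.

Lemma exists_singular_part_lt {A} : measurable A -> 0 < Pmix A ->
  exists th, P2 th A < Pth th A.
Proof.
move=> mA PmixA; apply: contrapT => /forallNP P2_ge.
have P2E : (fun th => P2 th A) = (fun th => Pth th A).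
  apply/funext => th; have [[Pa [_ decomp]] _] := P2_singular th.
  apply/eqP; rewrite eq_le; apply/andP; split; first by rewrite decomp// leeDr.
  by rewrite leNgt; apply/negP; exact: P2_ge.
by have := singular_lt_mixture _ mA PmixA; rewrite P2E -Pmix_mixture// ltxx.
Qed.

Lemma exists_dominating_parameter : exists th0, Pmix `<< Pth th0.
Proof.
have [th0 min0] := exists_min_null_mass.
exists th0; apply/null_content_dominatesP => A mA P0A.
apply/eqP; rewrite eq_le measure_ge0 andbT leNgt; apply/negP => PmixA.
have [th1 P2_lt] := exists_singular_part_lt mA PmixA.
have [[Pa [Pa_dom decomp]] _] := P2_singular th1.
have [th' dom'] :=
  exists_dominating_seq (fun n => if n is 0%N then th0 else th1).
have [A' [mA' P'A'] maxA'] := null_mass_attained Pmix (Pth th').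
have P0A' := (null_content_dominatesP _ _).1 (dom' 0%N) _ mA' P'A'.
have P1A' := (null_content_dominatesP _ _).1 (dom' 1%N) _ mA' P'A'.
have maxA'0 : Pmix A' = null_mass Pmix (Pth th0).
  by apply/eqP; rewrite eq_le null_mass_ub//= maxA' min0.
have mAD : measurable (A `\` A') by exact: measurableD.
have PaAD : Pa (A `\` A') = 0.
  exact: (null_content_dominatesP _ _).1 Pa_dom _ mAD
    (null_mass_maximal Pmix (Pth th0) mA P0A mA' P0A' maxA'0).
have PaA' : Pa A' = 0.
  by apply/eqP; rewrite -measure_le0 -P1A' decomp// leeDl.
have PaA : Pa A = 0.
  have AU : A `<=` A' `|` (A `\` A').
    by move=> w Aw; have [A'w|nA'w] := pselect (A' w); [left|right].
  apply/eqP; rewrite -measure_le0 -PaA' -[leRHS]adde0 -PaAD.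
  rewrite (le_trans (le_measure _ _ _ AU)) ?inE//; last exact: measureU2.
  exact: measurableU.
by move: P2_lt; rewrite decomp// PaA add0e ltxx.
Qed.

End dominating_parameter.

Section penalty_dominated_by_mixture.
Context {d : measure_display} {T : measurableType d} {R : realType}
  {alpha : probability T R -> \bar R} {QP : set (probability T R)}
  {Pmix : probability T R} {X : T -> R}.
Implicit Types (P Q : probability T R).
Hypothesis QP_dominated : forall Q, QP Q -> Q `<< Pmix.
Hypothesis alpha_out : forall Q, ~ QP Q -> alpha Q = +oo.
Hypothesis mX : measurable_fun setT X.

Let penalty_out Q f : ~ QP Q -> expect Q f - alpha Q = -oo.
Proof. by move=> nQ; rewrite alpha_out// addeNy. Qed.

Lemma rho_ae_version {Xt} : measurable_fun setT Xt ->
  {ae Pmix, forall w, Xt w = X w} -> rho alpha Xt = rhohatP alpha Pmix X.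
Proof.
move=> mXt XtX.
have expectE Q : Q `<< Pmix ->
    expect Q (fun w => - Xt w)%R = expect Q (fun w => - X w)%R.
  move=> QPmix; apply: expect_ae_eq; try exact: measurable_funN.
  by apply: filterS (ae_dominated QPmix XtX) => w ->.
apply/eqP; rewrite eq_le; apply/andP; split.
- apply: ge_ereal_sup => _ [Q _ <-].
  have [QPQ|nQPQ] := pselect (QP Q); last by rewrite penalty_out ?leNye.
  have QPmix := QP_dominated _ QPQ.
  by rewrite expectE//; apply: ereal_sup_ubound; exists Q.
- apply: ge_ereal_sup => _ [Q QPmix <-].
  by rewrite -expectE//; apply: ereal_sup_ubound; exists Q.
Qed.

Lemma rhohatP_le_mixture P : rhohatP alpha P X <= rhohatP alpha Pmix X.
Proof.
apply: ge_ereal_sup => _ [Q _ <-].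
have [QPQ|nQPQ] := pselect (QP Q); last by rewrite penalty_out ?leNye.
by apply: ereal_sup_ubound; exists Q => //; exact: QP_dominated.
Qed.

Lemma rhohatP_mixture_le P :
  Pmix `<< P -> rhohatP alpha Pmix X <= rhohatP alpha P X.
Proof.
move=> PmixP; apply: ge_ereal_sup => _ [Q QPmix <-].
apply: ereal_sup_ubound; exists Q => //.
exact: null_dominates_trans QPmix PmixP.
Qed.

Lemma rhohatP_mixture_le_rhoP P :
  Pmix `<< P -> rhohatP alpha Pmix X <= rhoP alpha P X.
Proof.
move=> PmixP; apply: le_ereal_inf_tmp => _ [Xt [[mXt _] PXt] <-].
rewrite rho_ae_version//; apply: ae_dominated PmixP _.
by apply/probability_eq1_ae => //; exact: measurable_eqr.
Qed.

Lemma rhoP_le_rhohatP_mixture P : Linf P X -> Linf Pmix X ->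
  rhoP alpha P X <= rhohatP alpha Pmix X.
Proof.
move=> LinfP LinfPmix.
have [Xt [bdXt PXt PmixXt]] := exists_bounded_version LinfP LinfPmix.
rewrite -(rho_ae_version bdXt.1 PmixXt).
apply: ereal_inf_lbound; exists Xt => //.
by split => //; apply/probability_eq1_ae => //; exact: measurable_eqr bdXt.1 mX.
Qed.

End penalty_dominated_by_mixture.

Theorem corollary6p14
  (d : measure_display) (Omega : measurableType d) (R : realType)
  (dT : measure_display) (Theta : measurableType dT)
  (nu : probability Theta R)
  (Pth : Theta -> probability Omega R)
  (Pmix : probability Omega R)
  (QP : set (probability Omega R))
  (alphat alpha : probability Omega R -> \bar R)
  (P2 : Theta -> {measure set Omega -> \bar R}) :
  (* θ ↦ P^θ(A) is measurable for every A ∈ F *)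
  (forall A, measurable A -> measurable_fun [set: Theta] (fun th => Pth th A)) ->
  (* M^Θ is closed under countable convex combinations *)
  (forall (th : nat -> Theta) (lam : nat -> R),
     (forall i, 0 <= lam i)%R ->
     \sum_(0 <= i <oo) (lam i)%:E = 1 ->
     exists th0, forall A, measurable A ->
       Pth th0 A = \sum_(0 <= i <oo) (lam i)%:E * Pth (th i) A) ->
  (* the mixture ℙ(A) = ∫ P^θ(A) ν(dθ) *)
  (forall A, measurable A -> Pmix A = \int[nu]_th Pth th A) ->
  (* Q^ℙ ⊆ P^ℙ, weak-* closed *)
  (forall Q, QP Q -> Q `<< Pmix) ->
  weak_closed QP ->
  (* form of α *)
  (forall Q, QP Q -> alpha Q = alphat Q) ->
  (forall Q, ~ QP Q -> alpha Q = +oo) ->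
  (forall Q, QP Q -> alphat Q < +oo) ->
  -oo < ereal_inf (alphat @` QP) ->
  (* standing assumption: ρ is real-valued on 𝒳 *)
  (forall X : Omega -> R, bdd_meas X -> rho alpha X \is a fin_num) ->
  (* P2 θ is the singular part of the Lebesgue decomposition of P^θ w.r.t. ℙ *)
  (forall th, lebesgue_singular_part (Pth th) Pmix (P2 th)) ->
  (forall A, measurable A -> 0 < Pmix A ->
     \int[nu]_th P2 th A < Pmix A) ->
  forall X : Omega -> R,
    (forall th, Linf (Pth th) X) -> Linf Pmix X ->
    let M := range Pth in
    rhohatM alpha M X = rhohatP alpha Pmix X /\
    rhohatP alpha Pmix X = rhoP alpha Pmix X /\
    rhoP alpha Pmix X = rhoM alpha M X.
Proof.
move=> _ convex_closed mixture QP_dom _ _ alpha_out _ _ _ singular singular_lt.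
move=> X LinfPth LinfPmix M.
have mX := LinfPmix.1.
have [th0 Pmix_th0] :=
  exists_dominating_parameter convex_closed mixture singular singular_lt.
have Mth0 : M (Pth th0) by exists th0.
have rhoP_le := rhoP_le_rhohatP_mixture QP_dom alpha_out mX.
have rhoP_ge := rhohatP_mixture_le_rhoP QP_dom alpha_out mX.
have rhoPmixE : rhoP alpha Pmix X = rhohatP alpha Pmix X.
  by apply/eqP; rewrite eq_le rhoP_le// rhoP_ge.
rewrite rhoPmixE; split; last split => //.
- apply: ereal_sup_image_eq Mth0 (rhohatP_mixture_le _ Pmix_th0) _ => P _.
  exact: rhohatP_le_mixture QP_dom alpha_out P.
- apply/esym; apply: ereal_sup_image_eq Mth0 (rhoP_ge _ Pmix_th0) _.
  by move=> _ [th _ <-]; exact: rhoP_le.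
Qed.
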